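(* Let $N\ge 1$ and let $A\subset\Gamma=\mathbb N_0^s$ satisfy \[ A\supseteq \bigcup_{j=1}^N\ \bigcup_{B\in L_j(\Gamma)} B , \] i.e. $A$ contains every lower set of cardinality at most $N$. Then $A$ is a monomial degree reducing universal interpolation set of order $N$.
   Context: $\Pi=\mathbb C[x_1,\dots,x_s]$, $\deg$ is total degree with $\deg 0<0$. For $A\subset\Gamma=\mathbb N_0^s$, $\Pi_A$ is the span of the monomials $x^\alpha$, $\alpha\in A$. A subspace $\mathcal P\subseteq\Pi$ is a degree reducing universal interpolation space of order $N$ if for every finite $X\subset\mathbb C^s$ with $\#X\le N$ and every $q\in\Pi$ there is $p\in\mathcal P$ with $p|_X=q|_X$ and $\deg p\le\deg q$. A set $A\subset\Gamma$ is a monomial degree reducing universal interpolation set of order $N$ if $\Pi_A$ is a degree reducing universal interpolation space of order $N$. For $\alpha,\beta\in\Gamma$, $\alpha\le\beta$ means $\alpha_j\le\beta_j$ for all $j$; $B\subset\Gamma$ is a lower set if $\alpha\in B$ and $\beta\le\alpha$ imply $\beta\in B$; $L_j(\Gamma)$ denotes the set of lower sets of cardinality $j$. *)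

From mathcomp Require Import all_boot all_algebra.
From mathcomp Require Import reals complex finmap mpoly.
Set Implicit Arguments. Unset Strict Implicit. Unset Printing Implicit Defensive.
Import GRing.Theory.
Local Open Scope ring_scope.

(* Gamma = N_0^s is the type of multinomials 'X_{1..s}.
   C is modelled as R[i] for an arbitrary R : realType (any realType is
   isomorphic to the real numbers, so R[i] is the complex field). *)

Definition mle (s : nat) (a b : 'X_{1..s}) : Prop := forall i : 'I_s, (a i <= b i)%N.

Definition lower_set (s : nat) (B : {fset 'X_{1..s}}) : Prop :=
  forall a b : 'X_{1..s}, a \in B -> mle b a -> b \in B.

Definition PiA (R : realType) (s : nat) (A : 'X_{1..s} -> Prop)
  (p : {mpoly R[i][s]}) : Prop :=
  forall m, m \in msupp p -> A m.

Definition evalpt (R : realType) (s : nat) (p : {mpoly R[i][s]}) (x : 'rV[R[i]]_s) : R[i] :=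
  p.@[fun j => x ord0 j].

(* total degree comparison with deg 0 < 0: msize p = deg p + 1 for p <> 0,
   msize 0 = 0, so deg p <= deg q  <->  msize p <= msize q. *)
Definition deg_le (R : realType) (s : nat) (p q : {mpoly R[i][s]}) : Prop :=
  (msize p <= msize q)%N.

Definition dr_univ_interp_space (R : realType) (s N : nat)
  (P : {mpoly R[i][s]} -> Prop) : Prop :=
  forall (X : seq 'rV[R[i]]_s), uniq X -> (size X <= N)%N ->
  forall q : {mpoly R[i][s]},
  exists p : {mpoly R[i][s]},
    [/\ P p, (forall x, x \in X -> evalpt p x = evalpt q x) & deg_le p q].

Definition monomial_dr_univ_interp_set (R : realType) (s N : nat)
  (A : 'X_{1..s} -> Prop) : Prop :=
  @dr_univ_interp_space R s N (@PiA R s A).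

From mathcomp Require Import all_boot all_order all_algebra.
From mathcomp Require Import boolp reals complex finmap mpoly.
Set Implicit Arguments. Unset Strict Implicit. Unset Printing Implicit Defensive.
Import GRing.Theory Order.TTheory.
Local Open Scope ring_scope.

(* Fix the finite point set X and call a monomial x^m reducible when, as a
   function on X, it is a combination of monomials smaller than m in the
   degree-compatible monomial order.  Repeated reduction writes every q, on X,
   in terms of irreducible monomials of degree at most deg q.  Reducibility is
   inherited by multiples, so the irreducible monomials form a lower set; and
   they are linearly independent on X (the leading monomial of a vanishing
   combination would be reducible), so any finitely many of them number at
   most #X <= N.  Hence those of degree at most deg q form a lower set of
   cardinality between 1 and N, which lies in A. *)

Lemma mcoeff_sum_mpolyX (R : nzRingType) (n k : nat) (e : seq 'X_{1..n})
    (c : 'I_k -> R) (j : 'I_k) :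
  uniq e -> size e = k ->
  (\sum_(t < k) c t *: 'X_[nth 0%MM e t])@_(nth 0%MM e j) = c j.
Proof.
move=> uniq_e size_e; rewrite raddf_sum (bigD1 j) //= big1 ?addr0 => [|t neq_tj].
  by rewrite mcoeffZ mcoeffX eqxx mulr1.
by rewrite mcoeffZ mcoeffX nth_uniq ?size_e // val_eqE (negbTE neq_tj) mulr0.
Qed.

Section DegreeReducingInterpolation.
Variables (F : fieldType) (s : nat).
Implicit Types (p q : {mpoly F[s]}) (m b : 'X_{1..s}) (S : 'X_{1..s} -> Prop).

Definition supported_in S p := forall m, ~ S m -> p@_m = 0.

Lemma supported_in0 S : supported_in S 0.
Proof. by move=> m _; rewrite mcoeff0. Qed.

Lemma supported_inD S p q :
  supported_in S p -> supported_in S q -> supported_in S (p + q).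
Proof. by move=> Sp Sq m nSm; rewrite mcoeffD Sp ?Sq ?addr0. Qed.

Lemma supported_inZ S c p : supported_in S p -> supported_in S (c *: p).
Proof. by move=> Sp m nSm; rewrite mcoeffZ Sp ?mulr0. Qed.

Lemma supported_inX S m : S m -> supported_in S 'X_[m].
Proof.
by move=> Sm m' nSm'; rewrite mcoeffX; case: eqP => // eq_m; case: nSm'; rewrite -eq_m.
Qed.

Lemma supported_in_sum S (I : Type) (r : seq I) (P : pred I) (G : I -> {mpoly F[s]}) :
  (forall j, P j -> supported_in S (G j)) ->
  supported_in S (\sum_(j <- r | P j) G j).
Proof. by move=> SG; apply: big_ind => //; [apply: supported_in0 | apply: supported_inD]. Qed.

Lemma supported_inW S S' p :
  (forall m, S m -> S' m) -> supported_in S p -> supported_in S' p.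
Proof. by move=> SS' Sp m nS'm; apply: Sp => /SS'. Qed.

Lemma supported_in_msupp S p m : supported_in S p -> m \in msupp p -> S m.
Proof. by move=> Sp; apply: contraPP => nSm; rewrite mcoeff_msupp Sp ?eqxx. Qed.

Variable X : seq ('I_s -> F).

Definition agree_on p q := forall x, x \in X -> p.@[x] = q.@[x].

Lemma agree_on_trans p q r : agree_on p q -> agree_on q r -> agree_on p r.
Proof. by move=> pq qr x Xx; rewrite pq // qr. Qed.

Lemma agree_onD p1 p2 q1 q2 :
  agree_on p1 q1 -> agree_on p2 q2 -> agree_on (p1 + p2) (q1 + q2).
Proof. by move=> pq1 pq2 x Xx; rewrite !mevalD pq1 ?pq2. Qed.

Lemma agree_onZ c p q : agree_on p q -> agree_on (c *: p) (c *: q).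
Proof. by move=> pq x Xx; rewrite !mevalZ pq. Qed.

Lemma agree_onMr p q r : agree_on p q -> agree_on (p * r) (q * r).
Proof. by move=> pq x Xx; rewrite !mevalM pq. Qed.

Lemma agree_on_supported S q :
  (forall m, m \in msupp q -> exists2 pm, supported_in S pm & agree_on 'X_[m] pm) ->
  exists2 p, supported_in S p & agree_on q p.
Proof.
move=> red_q; rewrite (mpolyE q); elim: (msupp q) red_q => [_|m r IH red_mr].
  by exists 0; [apply: supported_in0 | rewrite big_nil].
have [|p Sp qp] := IH; first by move=> m' r_m'; apply: red_mr; rewrite inE r_m' orbT.
have [pm Spm Xm_pm] := red_mr m (mem_head _ _).
exists (q@_m *: pm + p); first by apply: supported_inD => //; apply: supported_inZ.
by rewrite big_cons; apply: agree_onD => //; apply: agree_onZ.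
Qed.

Definition reducible m :=
  exists2 p, supported_in (fun b => (b < m)%O) p & agree_on 'X_[m] p.

Lemma reduce_mpolyX m :
  exists2 p, supported_in (fun b => ~ reducible b /\ (b <= m)%O) p
           & agree_on 'X_[m] p.
Proof.
elim/(well_founded_ind (@ltom_wf s)): m => m IH.
have [[p Sp Xm_p] | irr_m] := pselect (reducible m); last first.
  by exists 'X_[m] => //; apply: supported_inX.
pose S b := ~ reducible b /\ (b <= m)%O.
have [|p' Sp' p_p'] := agree_on_supported (S := S) (q := p); last first.
  by exists p' => //; apply: agree_on_trans p_p'.
move=> b /(supported_in_msupp Sp) lt_bm; have [pb Spb Xb_pb] := IH b lt_bm.
exists pb => //; apply: supported_inW Spb => b' [irr_b' le_b'b].
by split; last exact: le_trans (ltW lt_bm).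
Qed.

Lemma reduce_mpoly q :
  exists2 p, supported_in (fun b => ~ reducible b /\ (mdeg b < msize q)%N) p
           & agree_on q p.
Proof.
apply: agree_on_supported => m q_m; have [p Sp Xm_p] := reduce_mpolyX m.
exists p => //; apply: supported_inW Sp => b [irr_b le_bm]; split => //.
exact: leq_ltn_trans (lemc_mdeg le_bm) (msize_mdeg_lt q_m).
Qed.

Lemma reducible_lem a b : (b <= a)%MM -> reducible b -> reducible a.
Proof.
move=> le_ba [p Sp Xb_p]; have -> : a = (a - b + b)%MM by rewrite submK.
exists (p * 'X_[a - b]); last by rewrite mpolyXD mulrC; apply: agree_onMr.
rewrite (mpolyE p) mulr_suml big_seq; apply: supported_in_sum => m /(supported_in_msupp Sp).
move=> lt_mb; rewrite -scalerAl -mpolyXD; apply/supported_inZ/supported_inX.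
by rewrite [X in (_ < X)%O]addmC ltmc_add2l.
Qed.

(* If p vanishes on X and c x^l is its leading term, then on X the monomial
   x^l agrees with -(p - c x^l)/c, whose monomials are all below l. *)
Lemma irreducible_supported_eq0 p :
  supported_in (fun b => ~ reducible b) p -> agree_on p 0 -> p = 0.
Proof.
move=> Sp p_0; apply/eqP/negP => /negP p_neq0.
apply: (supported_in_msupp Sp (mlead_supp p_neq0)).
have c_neq0 : p@_(mlead p) != 0 by rewrite -mcoeff_msupp mlead_supp.
exists (- (p@_(mlead p))^-1 *: (p - p@_(mlead p) *: 'X_[mlead p])).
  move=> m /negP; rewrite -leNgt le_eqVlt => /orP[/eqP <-|lt_lm].
    by rewrite mcoeffZ mcoeffB mcoeffZ mcoeffX eqxx mulr1 subrr mulr0.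
  rewrite mcoeffZ mcoeffB mcoeffZ mcoeffX (mcoeff_gt_mlead lt_lm) (lt_eqF lt_lm).
  by rewrite mulr0 subrr mulr0.
move=> x Xx; rewrite mevalZ mevalB mevalZ p_0 // meval0 sub0r.
by rewrite mulrN mulNr opprK mulrA mulVf // mul1r.
Qed.

(* Irreducible monomials are linearly independent on X, so their evaluation
   matrix (x_j^(e_t))_(t, j) has full row rank, which is at most #X. *)
Lemma card_irreducible_le (B : {fset 'X_{1..s}}) :
  (forall b, b \in B -> ~ reducible b) -> (#|` B| <= size X)%N.
Proof.
move=> irr_B; set e : seq 'X_{1..s} := B.
pose M := \matrix_(t < #|` B|, j < size X)
  ('X_[nth 0%MM e t] : {mpoly F[s]}).@[nth (fun=> 0) X j].
suff /eqP <- : \rank M == #|` B| by apply: rank_leq_col.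
rewrite -/(row_free M) -kermx_eq0; apply/rowV0P => v /sub_kermxP vM0.
apply/rowP => t.
pose p := \sum_(t < #|` B|) v 0 t *: 'X_[nth 0%MM e t].
have p0 : p = 0.
  apply: irreducible_supported_eq0.
    apply: supported_in_sum => t' _; apply/supported_inZ/supported_inX/irr_B.
    by rewrite mem_nth.
  move=> x Xx; rewrite meval0 raddf_sum /=.
  have Xx_lt : (index x X < size X)%N by rewrite index_mem.
  transitivity ((v *m M) 0 (Ordinal Xx_lt)); last by rewrite vM0 mxE.
  by rewrite mxE; apply: eq_bigr => t' _; rewrite mevalZ !mxE /= nth_index.
by rewrite mxE -(mcoeff_sum_mpolyX (v 0) t (fset_uniq B)) // -/p p0 mcoeff0.
Qed.

Definition irreducible_below (d : nat) : {fset 'X_{1..s}} :=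
  seq_fset tt [seq m <- [seq bmnm k | k <- enum {: bmultinom s d}] | `[< ~ reducible m >]].

Lemma mem_irreducible_below d m :
  m \in irreducible_below d <-> ~ reducible m /\ (mdeg m < d)%N.
Proof.
rewrite seq_fsetE mem_filter.
split => [/andP[/asboolP irr_m /mapP[k _ eq_mk]]|[irr_m lt_md]].
  by subst m; split; last exact: bmdeg.
by rewrite asboolT //=; apply/mapP; exists (BMultinom lt_md); rewrite ?mem_enum.
Qed.

Lemma irreducible_below_lower d : lower_set (irreducible_below d).
Proof.
move=> a b /mem_irreducible_below[irr_a lt_ad] le_ba.
have le_ba' : (b <= a)%MM by apply/mnm_lepP.
apply/mem_irreducible_below; split; first by move=> /(reducible_lem le_ba').
exact: leq_ltn_trans (lemc_mdeg (lem_leo le_ba')) lt_ad.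
Qed.

End DegreeReducingInterpolation.

Theorem proposition19 (R : realType) (s N : nat) (A : 'X_{1..s} -> Prop) :
  (1 <= N)%N ->
  (forall j : nat, (1 <= j <= N)%N ->
     forall B : {fset 'X_{1..s}}, lower_set B -> #|` B| = j ->
     forall m, m \in B -> A m) ->
  @monomial_dr_univ_interp_set R s N A.
Proof.
(* The bound on #|B| holds with repeated points too, and B is never empty. *)
move=> _ A_lower X _ size_X q.
pose Y := [seq (fun j => x ord0 j) | x : 'rV[R[i]]_s <- X].
have [p Sp q_p] := reduce_mpoly Y q.
exists p; split.
- move=> m /(supported_in_msupp Sp) m_irr.
  have B_m : m \in irreducible_below Y (msize q) by apply/mem_irreducible_below.
  apply: (A_lower _ _ _ (irreducible_below_lower (X := Y) (d := msize q)) erefl _ B_m).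
  rewrite cardfs_gt0; apply/andP; split; first by apply/fset0Pn; exists m.
  rewrite (leq_trans _ size_X) // -(size_map (fun x : 'rV_s => x ord0) X).
  by apply: card_irreducible_le => b /mem_irreducible_below[].
- by move=> x X_x; rewrite /evalpt q_p //; apply: map_f.
- by rewrite /deg_le msizeE; apply/bigmax_leqP_seq => m /(supported_in_msupp Sp)[].
Qed.
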